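(* Let $g\ge2$, let $q_i(x,y)=a_ix^2+2b_ixy+c_iy^2$ ($i=1,\ldots,g$) be integer binary quadratic forms, irreducible over the integers, with $a_i\equiv1\pmod4$, and with $D:=\prod_{p\le2g}p\prod_k a_kc_k\delta_k\prod_{i<j}\operatorname{Res}(q_i,q_j)\neq0$. Let $p$ be prime, $e_1,\ldots,e_g\ge0$ integers, and $\sigma\in S_g$ with $e_{\sigma(1)}\le\cdots\le e_{\sigma(g)}$. Then $$\rho(p^{e_1},\ldots,p^{e_g})\ll(e_{\sigma(g)}-e_{\sigma(g-1)}+1)\,p^{2e_{\sigma(1)}+\cdots+2e_{\sigma(g-1)}+e_{\sigma(g)}}.$$ Also $$\rho(p,\ldots,p)=\rho^*(p,\ldots,p)+p^{2(g-1)}=p^{2(g-1)}+O(p),$$ and for all but finitely many primes $p$, for each $n=1,\ldots,g$ one has $\rho(p^{\alpha_1},\ldots,p^{\alpha_g})\le2p$ where $\alpha_i=1$ if $i=n$ and $\alpha_i=0$ otherwise. Implied constants depend only on the forms.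
   Context: $\delta_k$ is the discriminant of $q_k$, $\operatorname{Res}$ the resultant. For positive integers $d_1,\ldots,d_g$: $\Lambda_{\mathbf d}:=\{\mathbf x\in\mathbb Z^2:d_i\mid q_i(\mathbf x)\ \forall i\}$, $\rho(\mathbf d):=\#(\Lambda_{\mathbf d}\cap[0,d_1\cdots d_g)^2)$, $\Lambda^*_{\mathbf d}:=\{\mathbf x\in\Lambda_{\mathbf d}:\gcd(x_1,x_2,d_1\cdots d_g)=1\}$, $\rho^*(\mathbf d):=\#(\Lambda^*_{\mathbf d}\cap[0,d_1\cdots d_g)^2)$. *)

From HB Require Import structures.
From mathcomp Require Import all_boot all_order all_algebra all_fingroup.
Set Implicit Arguments. Unset Strict Implicit. Unset Printing Implicit Defensive.
Import Order.TTheory GRing.Theory Num.Theory.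
Local Open Scope ring_scope.

Definition qform (g : nat) (a b c : 'I_g -> int) (i : 'I_g) (x y : int) : int :=
  a i * x ^+ 2 + 2 * b i * x * y + c i * y ^+ 2.

Definition irreducible_form (A B C : int) : Prop :=
  ~ exists r s t u : int, forall x y : int,
      A * x ^+ 2 + B * x * y + C * y ^+ 2 = (r * x + s * y) * (t * x + u * y).

Definition disc (a b c : int) : int := (2 * b) ^+ 2 - 4 * a * c.

(* resultant of A1 x^2 + B1 x y + C1 y^2 and A2 x^2 + B2 x y + C2 y^2
   (the 4x4 Sylvester determinant, written out) *)
Definition resQ (A1 B1 C1 A2 B2 C2 : int) : int :=
  (A1 * C2 - A2 * C1) ^+ 2 - (A1 * B2 - A2 * B1) * (B1 * C2 - B2 * C1).

Definition res_forms (g : nat) (a b c : 'I_g -> int) (i j : 'I_g) : int :=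
  resQ (a i) (2 * b i) (c i) (a j) (2 * b j) (c j).

Definition Dconst (g : nat) (a b c : 'I_g -> int) : int :=
  (\prod_(p < (2 * g).+1 | prime p) p)%N%:Z
  * (\prod_(k < g) (a k * c k * disc (a k) (b k) (c k)))
  * (\prod_(i < g) \prod_(j < g | (i < j)%N) res_forms a b c i j).

Definition rho (g : nat) (a b c : 'I_g -> int) (d : 'I_g -> nat) : nat :=
  #|[set x : 'I_(\prod_(i < g) d i) * 'I_(\prod_(i < g) d i) |
      [forall i : 'I_g, ((d i)%:Z %| qform a b c i (x.1 : nat)%:Z (x.2 : nat)%:Z)%Z]]|.

Definition rho_star (g : nat) (a b c : 'I_g -> int) (d : 'I_g -> nat) : nat :=
  #|[set x : 'I_(\prod_(i < g) d i) * 'I_(\prod_(i < g) d i) |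
      [forall i : 'I_g, ((d i)%:Z %| qform a b c i (x.1 : nat)%:Z (x.2 : nat)%:Z)%Z]
      && (gcdn (gcdn x.1 x.2) (\prod_(i < g) d i) == 1)%N]|.

From HB Require Import structures.
From mathcomp Require Import all_boot all_order all_algebra all_fingroup.
From mathcomp Require Import zify ring.
Set Implicit Arguments. Unset Strict Implicit. Unset Printing Implicit Defensive.
Import Order.TTheory GRing.Theory Num.Theory.

(** Let q be a form with A C (B^2 - 4AC) <> 0. A zero (x, y) of q modulo p^F with p not dividing y
    is x = t y where t is a root of q(t, 1); completing the square turns such roots into square
    roots of the discriminant, of which there are O(1) modulo p^F. Zeros with p | x, y are p^2
    copies of the zeros modulo p^(F-2). Hence q has O((F + 1) p^F) zeros modulo p^F.

    For the first bound take the two forms q_i, q_j with the largest exponents e_i >= e_j. Their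
    resultant R satisfies R x^3, R y^3 in (q_i, q_j), so common zeros modulo p^(e_j) are divisible
    by p^J with 2J ~ e_j - v_p(R). Periodicity and rescaling reduce rho to the zeros of q_i modulo
    p^(e_i - 2J), which gives the factor e_i - e_j + 1.

    For d = (p, ..., p) the non-primitive pairs are the p^(2(g-1)) pairs with p | x, y, all of
    which are counted, and primitive common zeros of two forms exist only when p | R. For a
    single modulus p with p not dividing a_n, each y contributes at most two x. *)

Definition count_lt (n : nat) (P : pred nat) : nat := \sum_(0 <= x < n) P x.

Definition count_lt2 (n : nat) (P : nat -> nat -> bool) : nat :=
  \sum_(0 <= x < n) count_lt n (P x).

Lemma count_lt_le n (P : pred nat) : count_lt n P <= n.
Proof.
rewrite -[n in _ <= n]muln1 -[n in n * 1]subn0 -sum_nat_const_nat.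
by apply: leq_sum => x _; apply: leq_b1.
Qed.

Lemma count_lt_sub n (P Q : pred nat) :
  (forall x, x < n -> P x -> Q x) -> count_lt n P <= count_lt n Q.
Proof.
move=> PQ; rewrite /count_lt !big_nat; apply: leq_sum => x /andP[_ /PQ].
by case: (P x) => // ->.
Qed.

Lemma count_lt_predU n (P Q : pred nat) :
  count_lt n (fun x => P x || Q x) <= count_lt n P + count_lt n Q.
Proof. by rewrite -big_split; apply: leq_sum => x _ /=; case: (P x); case: (Q x). Qed.

Lemma count_lt_widen n n' (P : pred nat) : n <= n' -> count_lt n P <= count_lt n' P.
Proof. by move=> le_nn'; rewrite /count_lt (big_cat_nat _ le_nn') ?leq_addr. Qed.

Lemma count_lt_gt0P n (P : pred nat) : reflect (exists2 x, x < n & P x) (0 < count_lt n P).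
Proof.
rewrite lt0n /count_lt sum_nat_seq_neq0; apply: (iffP hasP) => [[x]|[x xn Px]].
  by rewrite mem_index_iota => /andP[_ xn]; case Px: (P x) => //; exists x.
by exists x; rewrite ?mem_index_iota ?Px.
Qed.

Lemma count_lt_pred1 n r : count_lt n (pred1 r) = (r < n).
Proof.
transitivity (count_mem r (index_iota 0 n)).
  by rewrite -sum1_count big_mkcond.
by rewrite count_uniq_mem ?iota_uniq // mem_index_iota.
Qed.

Lemma sum_nat_periodic M k (F : nat -> nat) : (forall x, F x = F (x %% M)) ->
  \sum_(0 <= x < M * k) F x = k * \sum_(0 <= x < M) F x.
Proof.
move=> FM; elim: k => [|k IHk]; first by rewrite muln0 big_geq.
rewrite mulnS addnC (big_cat_nat (n := M * k)) ?leq_addr //= IHk mulSn addnC.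
congr (_ + _); rewrite -{1}[M * k]add0n big_addn addKn; apply: eq_bigr => x _.
by rewrite FM [RHS]FM addnC mulnC modnMDl.
Qed.

Lemma count_lt_periodic M k (P : pred nat) : (forall x, P x = P (x %% M)) ->
  count_lt (M * k) P = k * count_lt M P.
Proof. by move=> PM; apply: sum_nat_periodic => x; rewrite PM. Qed.

Lemma count_lt_congr M k (P : pred nat) : 0 < M ->
  (forall x y, x < M * k -> y < M * k -> P x -> P y -> x = y %[mod M]) ->
  count_lt (M * k) P <= k.
Proof.
move=> M_gt0 PM; have [->//|/count_lt_gt0P[x0 x0lt Px0]] := posnP (count_lt (M * k) P).
apply: (@leq_trans (count_lt (M * k) (fun x => x %% M == x0 %% M))).
  by apply: count_lt_sub => x xlt Px; rewrite (PM x x0).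
rewrite count_lt_periodic => [|x]; last by rewrite modn_mod.
rewrite -[X in _ <= X]muln1 leq_mul2l; apply/orP; right.
apply: (@leq_trans (count_lt M (pred1 (x0 %% M)))).
  by apply: count_lt_sub => x xM /=; rewrite modn_small.
by rewrite count_lt_pred1 leq_b1.
Qed.

Lemma count_lt_fiber n m b (P S : pred nat) (G : nat -> nat -> bool) :
  (forall t, t < n -> P t -> exists2 u, u < m & G t u && S u) ->
  (forall u, u < m -> count_lt n (G^~ u) <= b) ->
  count_lt n P <= b * count_lt m S.
Proof.
move=> PG Gb; apply: (@leq_trans (\sum_(0 <= t < n) count_lt m (fun u => G t u && S u))).
  rewrite /count_lt big_nat [X in _ <= X]big_nat; apply: leq_sum => t /andP[_ tn].
  case Pt: (P t) => //; apply/count_lt_gt0P; exact: PG.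
rewrite /count_lt exchange_big big_distrr /= big_nat [X in _ <= X]big_nat.
apply: leq_sum => u /andP[_ um]; case: (S u); last by rewrite big1 // => t; rewrite andbF.
by rewrite muln1; under eq_bigr do rewrite andbT; apply: Gb.
Qed.

Lemma sum_nat_dvd d m (F : nat -> nat) : 0 < d ->
  \sum_(0 <= x < d * m | d %| x) F x = \sum_(0 <= u < m) F (d * u).
Proof.
move=> d_gt0; elim: m => [|m IHm]; first by rewrite muln0 !big_geq.
rewrite mulnS addnC (big_cat_nat (n := d * m)) ?leq_addr //= IHm big_nat_recr //=.
congr (_ + _); rewrite -{1}[d * m]add0n big_addn addKn big_ltn_cond //= dvdn_mulr //.
rewrite big_nat_cond big1 ?addn0 // => i /andP[/andP[i_gt0 i_lt_d]].
by rewrite dvdn_addl ?dvdn_mulr // => /(dvdn_leq i_gt0); rewrite leqNgt i_lt_d.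
Qed.

Lemma count_lt_dvd d m (P : pred nat) : 0 < d ->
  count_lt (d * m) (fun x => (d %| x) && P x) = count_lt m (fun u => P (d * u)).
Proof.
move=> d_gt0; rewrite /count_lt -(sum_nat_dvd _ (fun x => nat_of_bool (P x))) // [RHS]big_mkcond /=.
by apply: eq_bigr => x _; case: (d %| x).
Qed.

Lemma eq_count_lt2 n (P Q : nat -> nat -> bool) : P =2 Q -> count_lt2 n P = count_lt2 n Q.
Proof. by move=> PQ; apply: eq_bigr => x _; apply: eq_bigr => y _; rewrite PQ. Qed.

Lemma count_lt2_le n (P : nat -> nat -> bool) : count_lt2 n P <= n * n.
Proof.
rewrite -[n in n * _]subn0 -sum_nat_const_nat.
by apply: leq_sum => x _; apply: count_lt_le.
Qed.

Lemma count_lt2_predT n : count_lt2 n (fun _ _ => true) = n * n.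
Proof.
rewrite /count_lt2 /count_lt; under eq_bigr do rewrite sum_nat_const_nat subn0 muln1.
by rewrite sum_nat_const_nat subn0.
Qed.

Lemma count_lt2_sub n (P Q : nat -> nat -> bool) :
  (forall x y, x < n -> y < n -> P x y -> Q x y) -> count_lt2 n P <= count_lt2 n Q.
Proof.
move=> PQ; rewrite /count_lt2 !big_nat; apply: leq_sum => x /andP[_ xn].
by apply: count_lt_sub => y yn; apply: PQ.
Qed.

Lemma count_lt2_predU n (P Q : nat -> nat -> bool) :
  count_lt2 n (fun x y => P x y || Q x y) <= count_lt2 n P + count_lt2 n Q.
Proof. by rewrite -big_split; apply: leq_sum => x _; apply: count_lt_predU. Qed.

Lemma count_lt2_swap n (P : nat -> nat -> bool) : count_lt2 n P = count_lt2 n (fun x y => P y x).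
Proof. exact: exchange_big. Qed.

Lemma count_lt2_periodic M k (P : nat -> nat -> bool) :
  (forall x y, P x y = P (x %% M) (y %% M)) ->
  count_lt2 (M * k) P = k ^ 2 * count_lt2 M P.
Proof.
move=> PM; have PMl x y : P x y = P (x %% M) y by rewrite PM [RHS]PM modn_mod.
have PMr x y : P x y = P x (y %% M) by rewrite PM [RHS]PM modn_mod.
rewrite /count_lt2; under eq_bigr do rewrite (count_lt_periodic _ (PMr _)).
rewrite -big_distrr /= sum_nat_periodic => [|x]; first by rewrite mulnA mulnn.
by apply: eq_bigr => y _; rewrite PMl.
Qed.

Lemma count_lt2_dvd d m (P : nat -> nat -> bool) : 0 < d ->
  count_lt2 (d * m) (fun x y => [&& d %| x, d %| y & P x y])
  = count_lt2 m (fun u v => P (d * u) (d * v)).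
Proof.
move=> d_gt0; rewrite /count_lt2.
transitivity (\sum_(0 <= x < d * m | d %| x) count_lt (d * m) (fun y => (d %| y) && P x y)).
  rewrite [RHS]big_mkcond /=; apply: eq_bigr => x _.
  by case: (d %| x); last by rewrite /count_lt big1.
by rewrite sum_nat_dvd //; apply: eq_bigr => u _; rewrite count_lt_dvd.
Qed.

Lemma count_lt2_split n (P G : nat -> nat -> bool) :
  count_lt2 n P
  = count_lt2 n (fun x y => P x y && G x y) + count_lt2 n (fun x y => P x y && ~~ G x y).
Proof.
rewrite /count_lt2 -big_split; apply: eq_bigr => x _; rewrite /count_lt -big_split.
by apply: eq_bigr => y _; case: (P x y); case: (G x y).
Qed.

Lemma card_count_lt2 n (P : nat -> nat -> bool) :
  #|[set z : 'I_n * 'I_n | P z.1 z.2]| = count_lt2 n P.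
Proof.
rewrite -sum1dep_card big_mkcond /= -(pair_big xpredT xpredT (fun i j : 'I_n => P i j : nat)).
rewrite /count_lt2 big_mkord; apply: eq_bigr => x _; rewrite /count_lt big_mkord.
by apply: eq_bigr => y _; case: (P x y).
Qed.

Local Open Scope ring_scope.

Lemma PoszX (n k : nat) : (n ^ k)%N%:Z = n%:Z ^+ k.
Proof. by rewrite -!natz natrX. Qed.

Lemma dvdz_natB_eqmod (M x y : nat) : (M%:Z %| x%:Z - y%:Z)%Z -> (x = y %[mod M])%N.
Proof. by rewrite -eqz_mod_dvd !modz_nat => /eqP[]. Qed.

Lemma nat_rep_modz (M : nat) (W : int) :
  (0 < M)%N -> exists2 u : nat, (u < M)%N & (M%:Z %| W - u%:Z)%Z.
Proof.
move=> M_gt0; have M_neq0 : M%:Z != 0 by rewrite eqz_nat -lt0n.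
exists `|(W %% M%:Z)%Z|%N; first by rewrite -ltz_nat gez0_abs ?modz_ge0 ?ltz_pmod.
by rewrite gez0_abs ?modz_ge0 // {1}(divz_eq W M%:Z) addrK dvdz_mull.
Qed.

Lemma dvdz_pfactor_coprimel p F (y : nat) (X : int) : prime p -> ~~ (p %| y)%N ->
  ((p ^ F)%N%:Z %| y%:Z * X)%Z = ((p ^ F)%N%:Z %| X)%Z.
Proof.
by move=> p_pr py; rewrite !dvdzE abszM absz_nat Gauss_dvdr // coprimeXl ?prime_coprime.
Qed.

Lemma pfactor_dvdz_mul_cancel p F m (X Y : int) : prime p -> X != 0 ->
  ~~ ((p ^ m.+1)%N%:Z %| X)%Z -> ((p ^ F)%N%:Z %| X * Y)%Z -> ((p ^ (F - m))%N%:Z %| Y)%Z.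
Proof.
move=> p_pr X_neq0; have [->|Y_neq0] := eqVneq Y 0; first by rewrite dvdz0.
have [X_gt0 Y_gt0] : (0 < `|X|)%N /\ (0 < `|Y|)%N by rewrite !absz_gt0.
rewrite !dvdzE !absz_nat abszM !pfactor_dvdn ?muln_gt0 ?X_gt0 // lognM // -ltnNge.
by move=> ltmX leF; rewrite leq_subLR (leq_trans leF) // leq_add2r -ltnS.
Qed.

Lemma pfactor_dvdz_mul_split p F m (U V : int) : prime p ->
  ~~ ((p ^ m.+1)%N%:Z %| V - U)%Z -> ((p ^ F)%N%:Z %| U * V)%Z ->
  ((p ^ (F - m))%N%:Z %| U)%Z || ((p ^ (F - m))%N%:Z %| V)%Z.
Proof.
move=> p_pr ndiv dvdUV; have [dvdU|ndvdU] := boolP ((p ^ m.+1)%N%:Z %| U)%Z.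
  have ndvdV : ~~ ((p ^ m.+1)%N%:Z %| V)%Z by apply: contra ndiv => dvdV; rewrite rpredB.
  have V_neq0 : V != 0 by apply: contraNneq ndvdV => ->; rewrite dvdz0.
  by apply/orP; left; apply: (pfactor_dvdz_mul_cancel p_pr V_neq0 ndvdV); rewrite mulrC.
have U_neq0 : U != 0 by apply: contraNneq ndvdU => ->; rewrite dvdz0.
by apply/orP; right; apply: (pfactor_dvdz_mul_cancel p_pr U_neq0 ndvdU).
Qed.

Lemma logn_congr p F (X Y : int) : prime p -> Y != 0 -> (logn p `|Y| < F)%N ->
  ((p ^ F)%N%:Z %| X - Y)%Z -> X != 0 /\ logn p `|X| = logn p `|Y|.
Proof.
move=> p_pr Y_neq0 ltYF dvdXY; set d := logn p `|Y|.
have dvd_pd k : (k <= F)%N -> ((p ^ k)%N%:Z %| X - Y)%Z.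
  by move=> kF; apply: dvdz_trans dvdXY; apply: dvdn_exp2l.
have dvdY : ((p ^ d)%N%:Z %| Y)%Z by rewrite dvdzE absz_nat pfactor_dvdnn.
have ndvdY : ~~ ((p ^ d.+1)%N%:Z %| Y)%Z.
  by rewrite dvdzE absz_nat pfactor_dvdn ?absz_gt0 // ltnn.
have ndvdX : ~~ ((p ^ d.+1)%N%:Z %| X)%Z.
  by apply: contra ndvdY => dvdX; rewrite -(subKr X Y) rpredB ?dvd_pd.
have X_neq0 : X != 0 by apply: contraNneq ndvdX => ->; rewrite dvdz0.
have dvdX : ((p ^ d)%N%:Z %| X)%Z by rewrite -(subrK Y X) rpredD ?dvd_pd 1?ltnW.
split=> //; move: dvdX ndvdX; rewrite !dvdzE !absz_nat !pfactor_dvdn ?absz_gt0 //.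
by move=> le_d lt_d; apply/eqP; rewrite eqn_leq le_d andbT leqNgt.
Qed.

Lemma count_sqrt_le p F (D : int) : prime p -> D != 0 ->
  (count_lt (p ^ F) (fun u => ((p ^ F)%N%:Z %| (u%:Z ^+ 2 - D)%R)%Z) <= 4 * `|D|)%N.
Proof.
move=> p_pr D_neq0; have p_gt0 := prime_gt0 p_pr; set d := logn p `|D|.
have pd_le : (p ^ d <= `|D|)%N by apply: dvdn_leq (pfactor_dvdnn _ _); rewrite absz_gt0.
have [Fd|dF] := leqP F d.
  apply: (leq_trans (count_lt_le _ _)); rewrite (leq_trans (leq_pexp2l p_gt0 Fd)) //.
  by rewrite (leq_trans pd_le) // leq_pmull.
set sol := fun u : nat => _.
have [->//|/count_lt_gt0P[u1 _ u1_sol]] := posnP (count_lt (p ^ F) sol).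
have [] := logn_congr p_pr D_neq0 dF u1_sol; rewrite abszX absz_nat expf_eq0 /= => u1_neq0.
rewrite -/d => log_u1; set m := logn p (2 * u1).
have pm_le : (p ^ m <= 2 * `|D|)%N.
  rewrite /m lognM ?lt0n // expnD leq_mul //; first exact: dvdn_leq (pfactor_dvdnn p 2).
  by rewrite (leq_trans _ pd_le) // -log_u1 lognX leq_pexp2l // leq_pmull.
(* (u - u1) (u + u1) = 0 modulo p^F while the factors differ by 2 u1 of valuation m. *)
have sol_split u : sol u ->
    ((p ^ (F - m))%N%:Z %| u%:Z + - u1%:Z)%Z || ((p ^ (F - m))%N%:Z %| u%:Z + u1%:Z)%Z.
  move=> u_sol; apply: (pfactor_dvdz_mul_split p_pr).
    have -> : u%:Z + u1%:Z - (u%:Z + - u1%:Z) = (2 * u1)%N%:Z by rewrite PoszM; ring.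
    by rewrite dvdzE absz_nat pfactor_dvdn ?muln_gt0 ?lt0n // ltnn.
  have -> : (u%:Z + - u1%:Z) * (u%:Z + u1%:Z) = (u%:Z ^+ 2 - D) - (u1%:Z ^+ 2 - D) by ring.
  exact: rpredB.
have class_le (s : int) :
    (count_lt (p ^ F) (fun u => ((p ^ (F - m))%N%:Z %| (u%:Z + s)%R)%Z) <= p ^ m)%N.
  apply: (@leq_trans (count_lt (p ^ (F - m) * p ^ m) _)).
    by apply: count_lt_widen; rewrite -expnD leq_pexp2l //; lia.
  apply: count_lt_congr => [|x y _ _ dx dy]; first by rewrite expn_gt0 p_gt0.
  apply: dvdz_natB_eqmod; have -> : x%:Z - y%:Z = (x%:Z + s) - (y%:Z + s) by ring.
  exact: rpredB.
apply: (leq_trans (count_lt_sub (fun u _ => sol_split u))).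
apply: (leq_trans (count_lt_predU _ _ _)).
by apply: (leq_trans (leq_add (class_le _) (class_le _))); lia.
Qed.

Definition qf (A B C x y : int) : int := A * x ^+ 2 + B * x * y + C * y ^+ 2.

Definition qdisc (A B C : int) : int := B ^+ 2 - 4 * A * C.

Definition qf_dvd (M : nat) (A B C : int) (x y : nat) : bool :=
  (M%:Z %| qf A B C x%:Z y%:Z)%Z.

Lemma qfZ A B C k x y : qf A B C (k * x) (k * y) = k ^+ 2 * qf A B C x y.
Proof. by rewrite /qf; ring. Qed.

Lemma qf_swap A B C x y : qf A B C y x = qf C B A x y.
Proof. by rewrite /qf; ring. Qed.

Lemma qf_dvd_swap M A B C x y : qf_dvd M A B C y x = qf_dvd M C B A x y.
Proof. by rewrite /qf_dvd qf_swap. Qed.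

Lemma qf_dvd_scale A B C (d M u v : nat) : (0 < d)%N ->
  qf_dvd (d ^ 2 * M) A B C (d * u) (d * v) = qf_dvd M A B C u v.
Proof.
move=> d_gt0; rewrite /qf_dvd [(d ^ 2 * M)%N%:Z]PoszM PoszX !PoszM qfZ.
by rewrite dvdz_mul2l // expf_neq0 // eqz_nat -lt0n.
Qed.

Lemma qf_dvd_modn A B C (M N x y : nat) : (M %| N)%N ->
  qf_dvd M A B C x y = qf_dvd M A B C (x %% N) (y %% N).
Proof.
move=> dvdMN; rewrite /qf_dvd {1}(divn_eq x N) {1}(divn_eq y N) !PoszD !PoszM.
set X := (x %% N)%:Z; set Y := (y %% N)%:Z; set k := (x %/ N)%:Z; set l := (y %/ N)%:Z.
rewrite -(subrK (qf A B C X Y) (qf A B C _ _)) rpredDl // (@dvdz_trans N%:Z) //.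
have -> : qf A B C (k * N%:Z + X) (l * N%:Z + Y) - qf A B C X Y =
    N%:Z * (A * (k * k * N%:Z + 2 * k * X) + B * (k * l * N%:Z + k * Y + l * X)
            + C * (l * l * N%:Z + 2 * l * Y)) by rewrite /qf; ring.
exact: dvdz_mulr.
Qed.

Lemma qf_dvd_trans M N A B C x y : (M %| N)%N -> qf_dvd N A B C x y -> qf_dvd M A B C x y.
Proof. exact: (@dvdz_trans N%:Z M%:Z). Qed.

Lemma count_roots_le p F (A B C : int) : prime p -> A != 0 -> qdisc A B C != 0 ->
  (count_lt (p ^ F) (qf_dvd (p ^ F) A B C ^~ 1) <= 8 * `|A| * `|qdisc A B C|)%N.
Proof.
move=> p_pr A_neq0 D_neq0; have p_gt0 := prime_gt0 p_pr.
have pF_gt0 : (0 < p ^ F)%N by rewrite expn_gt0 p_gt0.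
have A2_neq0 : 2 * A != 0 by rewrite mulf_neq0.
set al := logn p `|2 * A|; set D := qdisc A B C.
have pal_le : (p ^ al <= 2 * `|A|)%N.
  by rewrite -[2%N]/`|2 : int|%N -abszM dvdn_leq ?pfactor_dvdnn // absz_gt0.
(* t |-> 2 A t + B maps roots to square roots of D, at most p^al to one. *)
apply: (@leq_trans (p ^ al * count_lt (p ^ F) (fun u => ((p ^ F)%N%:Z %| (u%:Z ^+ 2 - D)%R)%Z))).
  apply: (count_lt_fiber (G := fun t u => ((p ^ F)%N%:Z %| 2 * A * t%:Z + B - u%:Z)%Z)).
    move=> t _ root_t; have [u u_lt dvd_u] := nat_rep_modz (2 * A * t%:Z + B) pF_gt0.
    exists u => //; rewrite dvd_u /=.
    have -> : u%:Z ^+ 2 - D = 4 * A * qf A B C t%:Z 1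
        - (2 * A * t%:Z + B - u%:Z) * (2 * A * t%:Z + B + u%:Z) by rewrite /D /qdisc /qf; ring.
    by apply: rpredB; [apply: dvdz_mull | apply: dvdz_mulr].
  move=> u _; apply: (@leq_trans (count_lt (p ^ (F - al) * p ^ al) _)).
    by apply: count_lt_widen; rewrite -expnD leq_pexp2l //; lia.
  apply: count_lt_congr => [|x y _ _ dx dy]; first by rewrite expn_gt0 p_gt0.
  apply/dvdz_natB_eqmod/(pfactor_dvdz_mul_cancel p_pr A2_neq0).
    by rewrite dvdzE absz_nat pfactor_dvdn ?absz_gt0 // ltnn.
  have -> : 2 * A * (x%:Z - y%:Z) = (2 * A * x%:Z + B - u%:Z) - (2 * A * y%:Z + B - u%:Z).
    by ring.
  exact: rpredB.
by apply: (leq_trans (leq_mul pal_le (count_sqrt_le F p_pr D_neq0))); nia.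
Qed.

Lemma count_roots_prime_le p A B C : prime p -> ~~ (p %| `|A|)%N ->
  (count_lt p (qf_dvd p A B C ^~ 1) <= 2)%N.
Proof.
move=> p_pr pA; set root := qf_dvd p A B C ^~ 1%N.
have [->//|/count_lt_gt0P[t0 t0_lt root_t0]] := posnP (count_lt p root).
(* Roots other than t0 satisfy A (t + t0) + B = 0 mod p, so they are congruent mod p. *)
have dvd_sum t : (t < p)%N -> root t -> t != t0 -> (p%:Z %| A * (t%:Z + t0%:Z) + B)%Z.
  move=> t_lt root_t ne_tt0.
  have : (p%:Z %| (t%:Z - t0%:Z) * (A * (t%:Z + t0%:Z) + B))%Z.
    have -> : (t%:Z - t0%:Z) * (A * (t%:Z + t0%:Z) + B) = qf A B C t%:Z 1 - qf A B C t0%:Z 1.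
      by rewrite /qf; ring.
    exact: rpredB.
  rewrite dvdzE abszM Euclid_dvdM // -dvdzE; case/orP => // /dvdz_natB_eqmod.
  by rewrite !modn_small // => /eqP; rewrite (negbTE ne_tt0).
apply: (@leq_trans (count_lt p (fun t => (t == t0) || root t && (t != t0)))).
  by apply: count_lt_sub => t _ root_t; rewrite root_t orbN.
apply: (leq_trans (count_lt_predU _ _ _)); rewrite count_lt_pred1 t0_lt.
rewrite -[2%N]/(1 + 1)%N leq_add2l -[p]muln1.
apply: count_lt_congr => [|t t']; rewrite ?muln1 ?prime_gt0 // => t_lt t'_lt.
move=> /andP[root_t ne_t] /andP[root_t' ne_t'].
apply: dvdz_natB_eqmod; have : (p%:Z %| A * (t%:Z - t'%:Z))%Z.
  have -> : A * (t%:Z - t'%:Z) = (A * (t%:Z + t0%:Z) + B) - (A * (t'%:Z + t0%:Z) + B) by ring.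
  by apply: rpredB; apply: dvd_sum.
by rewrite dvdzE abszM Euclid_dvdM // (negbTE pA).
Qed.

Lemma count_qf_fiber_le p F y A B C : prime p -> ~~ (p %| y)%N ->
  (count_lt (p ^ F) (qf_dvd (p ^ F) A B C ^~ y) <= count_lt (p ^ F) (qf_dvd (p ^ F) A B C ^~ 1))%N.
Proof.
move=> p_pr py; have pF_gt0 : (0 < p ^ F)%N by rewrite expn_gt0 prime_gt0.
have [a _] := Bezoutl y pF_gt0; rewrite (eqP (coprimeXl _ _)) ?prime_coprime // => inv_a.
rewrite -[X in (_ <= X)%N]mul1n.
(* x = t y modulo p^F, where a y = -1 gives t = - x a. *)
apply: (count_lt_fiber (G := fun x t => ((p ^ F)%N%:Z %| x%:Z - t%:Z * y%:Z)%Z)).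
  move=> x _ root_x; have [t t_lt dvd_t] := nat_rep_modz (- (x%:Z * a%:Z)) pF_gt0.
  have dvd_x : ((p ^ F)%N%:Z %| x%:Z - t%:Z * y%:Z)%Z.
    have -> : x%:Z - t%:Z * y%:Z = x%:Z * (1 + a * y)%N%:Z + (- (x%:Z * a%:Z) - t%:Z) * y%:Z.
      by rewrite PoszD PoszM; ring.
    by apply: rpredD; [apply: dvdz_mull | apply: dvdz_mulr].
  exists t => //; rewrite dvd_x /qf_dvd /=.
  have py2 : ~~ (p %| y ^ 2)%N by rewrite Euclid_dvdX // negb_and py.
  rewrite -(@dvdz_pfactor_coprimel p F (y ^ 2) _ p_pr py2).
  have -> : (y ^ 2)%N%:Z * qf A B C t%:Z 1 = qf A B C x%:Z y%:Z
      - (x%:Z - t%:Z * y%:Z) * (A * (x%:Z + t%:Z * y%:Z) + B * y%:Z) by rewrite PoszX /qf; ring.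
  by apply: rpredB => //; apply: dvdz_mulr.
move=> t _; rewrite -[(p ^ F)%N]muln1; apply: count_lt_congr => // x x' _ _.
rewrite muln1 => dx dx'.
apply: dvdz_natB_eqmod.
have -> : x%:Z - x'%:Z = (x%:Z - t%:Z * y%:Z) - (x'%:Z - t%:Z * y%:Z) by ring.
exact: rpredB.
Qed.

Lemma count_qf_coprime_le p F A B C : prime p -> A != 0 -> qdisc A B C != 0 ->
  (count_lt2 (p ^ F) (fun x y => ~~ (p %| y)%N && qf_dvd (p ^ F) A B C x y)
   <= p ^ F * (8 * `|A| * `|qdisc A B C|))%N.
Proof.
move=> p_pr A_neq0 D_neq0; rewrite count_lt2_swap /count_lt2.
rewrite -[X in (X * _)%N]subn0 -sum_nat_const_nat; apply: leq_sum => y _.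
have [py|py] := boolP (p %| y)%N; first by rewrite /count_lt big1.
apply: leq_trans (count_roots_le F p_pr A_neq0 D_neq0).
by apply: leq_trans (count_qf_fiber_le F _ _ _ p_pr py); apply: count_lt_sub => x _ /andP[].
Qed.

Lemma count_qf_scale A B C (d M k : nat) : (0 < d)%N ->
  count_lt2 (d * (M * k)) (fun x y => [&& d %| x, d %| y & qf_dvd (d ^ 2 * M) A B C x y])%N
  = (k ^ 2 * count_lt2 M (qf_dvd M A B C))%N.
Proof.
move=> d_gt0; rewrite count_lt2_dvd // -count_lt2_periodic => [|x y]; last first.
  exact: qf_dvd_modn.
by apply: eq_count_lt2 => x y; rewrite qf_dvd_scale.
Qed.

Lemma count_qf_le p F A B C : prime p -> A != 0 -> C != 0 -> qdisc A B C != 0 ->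
  (count_lt2 (p ^ F) (qf_dvd (p ^ F) A B C)
   <= (8 * (`|A| + `|C|) * `|qdisc A B C| + 1) * F.+1 * p ^ F)%N.
Proof.
move=> p_pr A_neq0 C_neq0 D_neq0; have p_gt0 := prime_gt0 p_pr.
set K := (8 * (`|A| + `|C|) * `|qdisc A B C|)%N.
have coprime_le F' : (count_lt2 (p ^ F') (fun x y =>
    ~~ (p %| x)%N && qf_dvd (p ^ F') A B C x y || ~~ (p %| y)%N && qf_dvd (p ^ F') A B C x y)
    <= K * p ^ F')%N.
  apply: (leq_trans (count_lt2_predU _ _ _)); rewrite count_lt2_swap.
  rewrite (@eq_count_lt2 _ _ (fun x y => ~~ (p %| y)%N && qf_dvd (p ^ F') C B A x y)); last first.
    by move=> x y; rewrite qf_dvd_swap.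
  have DCA : qdisc C B A = qdisc A B C by rewrite /qdisc; ring.
  have := @count_qf_coprime_le p F' C B A p_pr C_neq0; rewrite DCA => /(_ D_neq0) le_CA.
  have le_AC := count_qf_coprime_le F' p_pr A_neq0 D_neq0.
  by apply: (leq_trans (leq_add le_CA le_AC)); rewrite /K; nia.
have split_le F' : (count_lt2 (p ^ F') (qf_dvd (p ^ F') A B C) <= K * p ^ F'
    + count_lt2 (p ^ F') (fun x y => [&& p %| x, p %| y & qf_dvd (p ^ F') A B C x y]))%N.
  apply: leq_trans (leq_add (coprime_le F') (leqnn _)); apply: leq_trans (count_lt2_predU _ _ _).
  by apply: count_lt2_sub => x y _ _ ->; case: (p %| x)%N; case: (p %| y)%N.
elim/ltn_ind: F => -[|[|F]] IH; apply: (leq_trans (split_le _)).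
- by rewrite expn0; apply: (leq_trans (leq_add (leqnn _) (count_lt2_le _ _))); lia.
- rewrite expn1 -[X in count_lt2 X]muln1 count_lt2_dvd //.
  by apply: (leq_trans (leq_add (leqnn _) (count_lt2_le _ _))); nia.
have -> : count_lt2 (p ^ F.+2) (fun x y => [&& p %| x, p %| y & qf_dvd (p ^ F.+2) A B C x y])%N
    = (p ^ 2 * count_lt2 (p ^ F) (qf_dvd (p ^ F) A B C))%N.
  by rewrite -(@count_qf_scale A B C p (p ^ F) p) // -expnSr -expnS -expnD add2n.
have := IH F (leqnSn _); rewrite -/K -[(p ^ F.+2)%N]/(p ^ (2 + F))%N expnD.
by set q := (p ^ F)%N; set r := (p ^ 2)%N; nia.
Qed.

Lemma resQC A1 B1 C1 A2 B2 C2 : resQ A1 B1 C1 A2 B2 C2 = resQ A2 B2 C2 A1 B1 C1.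
Proof. by rewrite /resQ; ring. Qed.

Lemma dvdz_resQ_cube (d A1 B1 C1 A2 B2 C2 x y : int) :
  (d %| qf A1 B1 C1 x y)%Z -> (d %| qf A2 B2 C2 x y)%Z ->
  (d %| resQ A1 B1 C1 A2 B2 C2 * x ^+ 3)%Z && (d %| resQ A1 B1 C1 A2 B2 C2 * y ^+ 3)%Z.
Proof.
move=> dq1 dq2; rewrite /resQ.
set u := A1 * C2 - A2 * C1; set v := A1 * B2 - A2 * B1; set w := B1 * C2 - B2 * C1.
apply/andP; split.
  have -> : (u ^+ 2 - v * w) * x ^+ 3 = ((u * C2 - w * B2) * x - w * C2 * y) * qf A1 B1 C1 x y
      + ((w * B1 - u * C1) * x + w * C1 * y) * qf A2 B2 C2 x y by rewrite /u /v /w /qf; ring.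
  by apply: rpredD; apply: dvdz_mull.
have -> : (u ^+ 2 - v * w) * y ^+ 3 = (v * A2 * x + (v * B2 - u * A2) * y) * qf A1 B1 C1 x y
    + ((u * A1 - v * B1) * y - v * A1 * x) * qf A2 B2 C2 x y by rewrite /u /v /w /qf; ring.
by apply: rpredD; apply: dvdz_mull.
Qed.

Lemma qf_common_zero_dvdp p E A1 B1 C1 A2 B2 C2 (x y : nat) : prime p ->
  resQ A1 B1 C1 A2 B2 C2 != 0 -> (logn p `|resQ A1 B1 C1 A2 B2 C2| < E)%N ->
  qf_dvd (p ^ E) A1 B1 C1 x y -> qf_dvd (p ^ E) A2 B2 C2 x y -> (p %| x)%N && (p %| y)%N.
Proof.
move=> p_pr R_neq0 ltRE q1 q2; have /andP[Rx Ry] := dvdz_resQ_cube q1 q2.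
suff cube_dvd z : ((p ^ E)%N%:Z %| resQ A1 B1 C1 A2 B2 C2 * z%:Z ^+ 3)%Z -> (p %| z)%N.
  by rewrite (cube_dvd _ Rx) (cube_dvd _ Ry).
apply: contraLR => pz; rewrite mulrC -PoszX dvdz_pfactor_coprimel ?Euclid_dvdX ?negb_and ?pz //.
by rewrite dvdzE absz_nat pfactor_dvdn ?absz_gt0 // -ltnNge.
Qed.

Lemma qf_common_zero_dvd p n E A1 B1 C1 A2 B2 C2 (x y : nat) : prime p ->
  resQ A1 B1 C1 A2 B2 C2 != 0 -> (2 * n <= E - logn p `|resQ A1 B1 C1 A2 B2 C2|)%N ->
  qf_dvd (p ^ E) A1 B1 C1 x y -> qf_dvd (p ^ E) A2 B2 C2 x y -> (p ^ n %| x)%N && (p ^ n %| y)%N.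
Proof.
move=> p_pr R_neq0; have p_gt0 := prime_gt0 p_pr.
elim: n E x y => [|n IHn] E x y leE q1 q2; first by rewrite !dvd1n.
have ltRE : (logn p `|resQ A1 B1 C1 A2 B2 C2| < E)%N by lia.
have /andP[/dvdnP[x' def_x] /dvdnP[y' def_y]] := qf_common_zero_dvdp p_pr R_neq0 ltRE q1 q2.
have scale A B C : qf_dvd (p ^ E) A B C x y -> qf_dvd (p ^ (E - 2)) A B C x' y'.
  rewrite -(@qf_dvd_scale A B C p (p ^ (E - 2)) x' y') // -expnD subnKC; last by lia.
  by rewrite def_x def_y [(p * x')%N]mulnC [(p * y')%N]mulnC.
rewrite def_x def_y expnSr !dvdn_pmul2r //.
by apply: (IHn (E - 2)%N); rewrite ?scale //; lia.
Qed.

Lemma count_qf_pair_le p E E' T A1 B1 C1 A2 B2 C2 : prime p ->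
  A1 != 0 -> C1 != 0 -> qdisc A1 B1 C1 != 0 -> resQ A1 B1 C1 A2 B2 C2 != 0 -> (E' <= E)%N ->
  (count_lt2 (p ^ (E + T)) (fun x y => qf_dvd (p ^ E) A1 B1 C1 x y && qf_dvd (p ^ E') A2 B2 C2 x y)
   <= (8 * (`|A1| + `|C1|) * `|qdisc A1 B1 C1| + 1) * (`|resQ A1 B1 C1 A2 B2 C2| + 2)
      * (E - E' + 1) * p ^ (2 * T + E))%N.
Proof.
move=> p_pr A_neq0 C_neq0 D_neq0 R_neq0 le_E'E; have p_gt0 := prime_gt0 p_pr.
set R := resQ _ _ _ _ _ _; set r := logn p `|R|; set J := ((E' - r)./2)%N.
have r_le : (r <= `|R|)%N by apply/ltnW/ltn_logl; rewrite absz_gt0.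
have J_le : (2 * J <= E' - r)%N.
  by rewrite /J mul2n -{2}(odd_double_half (E' - r)) leq_addl.
have J_ge : (E' - r <= 2 * J + 1)%N.
  by rewrite /J mul2n -{1}(odd_double_half (E' - r)) addnC leq_add2l leq_b1.
rewrite expnD count_lt2_periodic => [|x y]; last first.
  by rewrite -!qf_dvd_modn // dvdn_exp2l.
have eE : (p ^ J * (p ^ (E - 2 * J) * p ^ J) = p ^ E)%N by rewrite -!expnD; congr expn; lia.
have eE2 : ((p ^ J) ^ 2 * p ^ (E - 2 * J) = p ^ E)%N by rewrite -expnM -expnD; congr expn; lia.
have le_scaled : (count_lt2 (p ^ E)
      (fun x y => qf_dvd (p ^ E) A1 B1 C1 x y && qf_dvd (p ^ E') A2 B2 C2 x y)
    <= (p ^ J) ^ 2 * count_lt2 (p ^ (E - 2 * J)) (qf_dvd (p ^ (E - 2 * J)) A1 B1 C1))%N.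
  rewrite -(@count_qf_scale A1 B1 C1 (p ^ J) _ (p ^ J)) ?expn_gt0 ?p_gt0 // eE eE2.
  apply: count_lt2_sub => x y _ _ /andP[q1 q2]; rewrite q1 andbT.
  apply: (qf_common_zero_dvd p_pr R_neq0 _ _ q2); first exact: J_le.
  by apply: qf_dvd_trans q1; apply: dvdn_exp2l.
have len : ((E - 2 * J).+1 <= (`|R| + 2) * (E - E' + 1))%N by nia.
have zeros_le := count_qf_le (E - 2 * J) p_pr A_neq0 C_neq0 D_neq0.
apply: (leq_trans (leq_mul (leqnn _) (leq_trans le_scaled (leq_mul (leqnn _) zeros_le)))).
have ep : ((p ^ T) ^ 2 * (p ^ J) ^ 2 * p ^ (E - 2 * J) = p ^ (2 * T + E))%N.
  by rewrite -!expnM -!expnD; congr expn; lia.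
rewrite -ep; set K := (8 * _ * _ + 1)%N; set pw := ((p ^ T) ^ 2 * _ * _)%N.
have -> : ((p ^ T) ^ 2 * ((p ^ J) ^ 2 * (K * (E - 2 * J).+1 * p ^ (E - 2 * J))))%N
    = (K * (E - 2 * J).+1 * pw)%N by rewrite /pw; ring.
by rewrite leq_mul2r -!mulnA leq_mul2l len !orbT.
Qed.

Section FormFamily.

Variables (g : nat) (a b c : 'I_g -> int).

(* [qform a b c i] is convertible to [qf (a i) (2 * b i) (c i)]. *)
Lemma rho_qf_dvd (d : 'I_g -> nat) : rho a b c d =
  count_lt2 (\prod_(i < g) d i) (fun x y => [forall i, qf_dvd (d i) (a i) (2 * b i) (c i) x y]).
Proof. exact: card_count_lt2. Qed.

Lemma rho_star_qf_dvd (d : 'I_g -> nat) : rho_star a b c d =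
  count_lt2 (\prod_(i < g) d i) (fun x y => [forall i, qf_dvd (d i) (a i) (2 * b i) (c i) x y]
                                          && (gcdn (gcdn x y) (\prod_(i < g) d i) == 1)%N).
Proof. exact: card_count_lt2. Qed.

Lemma rho_const_prime p : (0 < g)%N -> prime p ->
  rho a b c (fun _ => p) = (rho_star a b c (fun _ => p) + p ^ (2 * (g - 1)))%N.
Proof.
move=> g_gt0 p_pr; have p_gt0 := prime_gt0 p_pr.
rewrite rho_star_qf_dvd rho_qf_dvd prod_nat_const card_ord.
rewrite (count_lt2_split _ _ (fun x y => gcdn (gcdn x y) (p ^ g) == 1)%N); congr addn.
rewrite (@eq_count_lt2 _ _ (fun x y => [&& p %| x, p %| y & true])%N) => [|x y].
  rewrite (_ : p ^ g = p * p ^ (g - 1))%N ?count_lt2_dvd ?count_lt2_predT //.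
    by rewrite -expnD addnn -mul2n.
  by rewrite -expnS subn1 prednK.
rewrite -/(coprime _ _) coprime_pexpr // coprime_sym prime_coprime // negbK dvdn_gcd andbT.
have [/andP[px py]|] := boolP ((p %| x) && (p %| y))%N; last by rewrite andbF.
rewrite andbT; apply/forallP => i; rewrite /qf_dvd.
have -> : qf (a i) (2 * b i) (c i) x%:Z y%:Z
    = x%:Z * (a i * x%:Z + 2 * b i * y%:Z) + y%:Z * (c i * y%:Z) by rewrite /qf; ring.
by apply: rpredD; apply: dvdz_mulr.
Qed.

Hypothesis D_neq0 : Dconst a b c != 0.

Lemma Dconst_factor (X : int) : (X %| Dconst a b c)%Z -> X != 0 /\ (`|X| <= `|Dconst a b c|)%N.
Proof.
move=> dvdX; split; first by apply: contraNneq D_neq0 => X0; rewrite -dvd0z -X0.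
by apply: dvdn_leq; rewrite ?absz_gt0 // -dvdzE.
Qed.

Lemma dvdz_form_Dconst k : [/\ (a k %| Dconst a b c)%Z, (c k %| Dconst a b c)%Z
  & (qdisc (a k) (2 * b k) (c k) %| Dconst a b c)%Z].
Proof.
have dvdF X : (X %| a k * c k * disc (a k) (b k) (c k))%Z -> (X %| Dconst a b c)%Z.
  move=> dvdX; rewrite /Dconst (bigD1 k) //=.
  by apply: dvdz_mulr; apply: dvdz_mull; apply: dvdz_mulr.
split; apply: dvdF.
- by apply: dvdz_mulr; apply: dvdz_mulr; apply: dvdzz.
- by apply: dvdz_mulr; apply: dvdz_mull; apply: dvdzz.
- by apply: dvdz_mull; apply: dvdzz.
Qed.

Lemma dvdz_res_Dconst i j : i != j -> (res_forms a b c i j %| Dconst a b c)%Z.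
Proof.
wlog lt_ij : i j / (i < j)%N => [wlog_ij|_].
  rewrite neq_ltn => /orP[lt|lt]; first by apply: wlog_ij; rewrite // neq_ltn lt.
  by rewrite /res_forms resQC; apply: wlog_ij; rewrite // neq_ltn lt.
set row := \prod_(j0 < g | (i < j0)%N) res_forms a b c i j0.
have dvd_row : (res_forms a b c i j %| row)%Z.
  by rewrite /row (bigD1 j) //=; apply: dvdz_mulr; apply: dvdzz.
apply: (dvdz_trans dvd_row); rewrite /Dconst; apply: dvdz_mull.
by rewrite (bigD1 i) //=; apply: dvdz_mulr; apply: dvdzz.
Qed.

Lemma rho_star_const_prime_le p : (2 <= g)%N -> prime p ->
  (rho_star a b c (fun _ => p) <= `|Dconst a b c| ^ (2 * g) * p)%N.
Proof.
move=> g_ge2 p_pr; have p_gt0 := prime_gt0 p_pr; have g_gt0 : (0 < g)%N := ltnW g_ge2.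
pose i0 : 'I_g := Ordinal g_gt0; pose i1 : 'I_g := Ordinal g_ge2.
have [R_neq0 R_le] := Dconst_factor (@dvdz_res_Dconst i0 i1 isT).
rewrite rho_star_qf_dvd prod_nat_const card_ord.
have [pR|pR] := boolP (p %| `|res_forms a b c i0 i1|)%N.
  have p_le : (p <= `|Dconst a b c|)%N by apply: leq_trans R_le; apply: dvdn_leq; rewrite ?absz_gt0.
  apply: (leq_trans (count_lt2_le _ _)); rewrite -expnD addnn -mul2n.
  have [k def_2g] : exists k, (2 * g = k.+1)%N by exists (2 * g).-1; rewrite prednK ?muln_gt0.
  rewrite def_2g expnS mulnC leq_mul // (@leq_trans (`|Dconst a b c| ^ k)) //.
    by rewrite leq_exp2r //; lia.
  by rewrite expnS leq_pmull ?absz_gt0.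
rewrite (_ : count_lt2 _ _ = 0%N) //; apply/big1 => x _; apply/big1 => y _.
apply/eqP; rewrite eqb0; apply/negP => /andP[/forallP all_q coprime_xy].
have logR : (logn p `|res_forms a b c i0 i1| < 1)%N by rewrite logn_coprime ?prime_coprime.
have := @qf_common_zero_dvdp p 1 _ _ _ _ _ _ x y p_pr R_neq0 logR (all_q i0) (all_q i1).
move: coprime_xy; rewrite -/(coprime _ _) coprime_pexpr // coprime_sym prime_coprime //.
by rewrite dvdn_gcd => /negPf ->.
Qed.

Lemma rho_single_prime_le p n : prime p -> (`|Dconst a b c| < p)%N ->
  (rho a b c (fun i => p ^ (i == n)) <= 2 * p)%N.
Proof.
move=> p_pr Dp; have [/Dconst_factor[a_neq0 a_le] _ _] := dvdz_form_Dconst n.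
have pA : ~~ (p %| `|a n|)%N.
  apply/negP => /dvdn_leq; rewrite absz_gt0 => /(_ a_neq0).
  by rewrite leqNgt (leq_ltn_trans a_le Dp).
rewrite rho_qf_dvd (_ : \prod_(i < g) p ^ (i == n) = p)%N; last first.
  by rewrite (bigD1 n) //= eqxx expn1 big1 ?muln1 // => i /negbTE ->.
apply: (@leq_trans (count_lt2 p (qf_dvd p (a n) (2 * b n) (c n)))).
  by apply: count_lt2_sub => x y _ _ /forallP /(_ n); rewrite eqxx expn1.
rewrite count_lt2_swap /count_lt2 (_ : 2 * p = \sum_(0 <= y < p) 2)%N; last first.
  by rewrite sum_nat_const_nat subn0 mulnC.
rewrite big_nat [X in (_ <= X)%N]big_nat; apply: leq_sum => y /andP[_ y_lt].
have [->|y_gt0] := posnP y.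
  apply: (@leq_trans (count_lt p (pred1 0%N))); last by rewrite count_lt_pred1 prime_gt0.
  apply: count_lt_sub => x x_lt; rewrite /qf_dvd (_ : qf _ _ _ _ _ = a n * (x * x)%N%:Z).
    by rewrite dvdzE abszM absz_nat !Euclid_dvdM // (negbTE pA) orbb /dvdn modn_small.
  by rewrite /qf PoszM; ring.
have py : ~~ (p %| y)%N by rewrite /dvdn modn_small // -lt0n.
have := count_qf_fiber_le 1 (a n) (2 * b n) (c n) p_pr py; rewrite expn1 => /leq_trans.
by apply; apply: count_roots_prime_le.
Qed.

Lemma rho_pfactor_le p (e : 'I_g -> nat) i1 i2 : prime p -> i1 != i2 -> (e i2 <= e i1)%N ->
  (rho a b c (fun i => p ^ e i)
   <= (16 * `|Dconst a b c| ^ 2 + 1) * (`|Dconst a b c| + 2) * (e i1 - e i2 + 1)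
      * p ^ (2 * (\sum_(i < g | i != i1) e i) + e i1))%N.
Proof.
move=> p_pr ne12 le21; set T := (\sum_(i < g | i != i1) e i)%N.
have [/Dconst_factor[a_neq0 a_le] /Dconst_factor[c_neq0 c_le] /Dconst_factor[D_neq0' D_le]] :=
  dvdz_form_Dconst i1.
have [R_neq0 R_le] := Dconst_factor (dvdz_res_Dconst ne12).
rewrite rho_qf_dvd -expn_sum (bigD1 i1) //= -/T.
apply: (@leq_trans (count_lt2 (p ^ (e i1 + T)) (fun x y =>
    qf_dvd (p ^ e i1) (a i1) (2 * b i1) (c i1) x y
    && qf_dvd (p ^ e i2) (a i2) (2 * b i2) (c i2) x y))).
  by apply: count_lt2_sub => x y _ _ /forallP q; rewrite !q.
apply: (leq_trans (count_qf_pair_le T p_pr a_neq0 c_neq0 D_neq0' R_neq0 le21)).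
rewrite leq_mul2r leq_mul2r; apply/orP; right; apply/orP; right.
by apply: leq_mul; [nia | rewrite leq_add2r].
Qed.

End FormFamily.

Theorem lemma2p4 (g : nat) (a b c : 'I_g -> int) :
  (2 <= g)%N ->
  (forall i, irreducible_form (a i) (2 * b i) (c i)) ->
  (forall i, (a i = 1 %[mod 4])%Z) ->
  Dconst a b c != 0 ->
  (* first bound *)
  (exists C : nat, forall (p : nat) (e : 'I_g -> nat) (s : {perm 'I_g}),
     prime p ->
     (forall i j : 'I_g, (i <= j)%N -> (e (s i) <= e (s j))%N) ->
     forall lst pen : 'I_g, val lst = g.-1 -> val pen = g.-2 ->
     (rho a b c (fun i => p ^ e i)
        <= C * (e (s lst) - e (s pen) + 1)
             * p ^ ((\sum_(i < g | i != lst) 2 * e (s i)) + e (s lst)))%N)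
  /\ (forall p : nat, prime p ->
        rho a b c (fun _ => p) = (rho_star a b c (fun _ => p) + p ^ (2 * (g - 1)))%N)
  /\ (exists C : nat, forall p : nat, prime p ->
        `| (rho a b c (fun _ => p))%:Z - (p ^ (2 * (g - 1)))%:Z | <= (C * p)%:Z)
  /\ (exists N : nat, forall p : nat, prime p -> (N < p)%N ->
        forall n : 'I_g, (rho a b c (fun i => p ^ (i == n)) <= 2 * p)%N).
Proof.
move=> g_ge2 _ _ D_neq0; have g_gt0 : (0 < g)%N := ltnW g_ge2.
have rho_split p (p_pr : prime p) := rho_const_prime a b c g_gt0 p_pr.
split.
  exists ((16 * `|Dconst a b c| ^ 2 + 1) * (`|Dconst a b c| + 2))%N.
  move=> p e s p_pr e_sorted lst pen lst_last pen_last.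
  have ne_lst_pen : s lst != s pen.
    by rewrite (inj_eq perm_inj); apply/eqP => /(congr1 val); rewrite lst_last pen_last; lia.
  have le_pen_lst : (e (s pen) <= e (s lst))%N.
    by apply: e_sorted; rewrite lst_last pen_last; lia.
  have sum_perm : (\sum_(i < g | i != lst) e (s i) = \sum_(i < g | i != s lst) e i)%N.
    by rewrite [RHS](reindex_inj (@perm_inj _ s)); apply: eq_bigl => i; rewrite (inj_eq perm_inj).
  by rewrite -big_distrr /= sum_perm rho_pfactor_le.
split; first exact: rho_split.
split.
  exists (`|Dconst a b c| ^ (2 * g))%N => p p_pr.
  by rewrite rho_split // PoszD addrK ger0_norm // lez_nat rho_star_const_prime_le.
by exists `|Dconst a b c|%N => p p_pr Dp n; apply: rho_single_prime_le.
Qed.
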